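(* Let $m$ be an integer with $m \equiv 3 \pmod 4$ and $m \ge 3$, and let $n = 3^m - 1$. Then: (i) the ternary cyclic code $\mathcal{C}_{(0,3,m)}$ has length $n$ and dimension $n/2$, and the ternary cyclic code $\mathcal{C}_{(1,2,m)}$ has length $n$ and dimension $(n+2)/2$; (ii) the ternary cyclic code $\mathcal{C}_{(2,3,m)}$ has length $n$ and dimension $n/2$, and the ternary cyclic code $\mathcal{C}_{(0,1,m)}$ has length $n$ and dimension $(n+2)/2$.
   Context: Let $m \ge 2$ be an integer, $n = 3^m-1$, and let $\alpha$ be a primitive element of $\mathbb{F}_{3^m}$. For an integer $0 \le j \le n-1$ with $3$-adic expansion $j = \sum_{t=0}^{m-1} j_t 3^t$, $j_t \in \{0,1,2\}$, let $w_3(j) = \sum_{t=0}^{m-1} j_t$ (the $3$-weight of $j$). For distinct $i_1, i_2 \in \{0,1,2,3\}$ let $T_{(i_1,i_2,m)} = \{1 \le j \le n-1 : w_3(j) \equiv i_1 \text{ or } i_2 \pmod 4\}$ and $g_{(i_1,i_2,m)}(x) = \prod_{j \in T_{(i_1,i_2,m)}} (x - \alpha^j)$, which lies in $\mathbb{F}_3[x]$. $\mathcal{C}_{(i_1,i_2,m)}$ denotes the ternary cyclic code of length $n$ with generator polynomial $g_{(i_1,i_2,m)}(x)$, i.e. the ideal generated by $g_{(i_1,i_2,m)}(x)$ in $\mathbb{F}_3[x]/(x^n-1)$. *)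

From HB Require Import structures.
From mathcomp Require Import all_boot all_order all_algebra all_field.
Set Implicit Arguments. Unset Strict Implicit. Unset Printing Implicit Defensive.
Import GRing.Theory.
Local Open Scope ring_scope.

Definition w3 (m j : nat) : nat := (\sum_(t < m) (j %/ 3 ^ t) %% 3)%N.

Definition clen (m : nat) : nat := (3 ^ m - 1)%N.

Definition Tset (i1 i2 m j : nat) : bool :=
  [&& (1 <= j)%N, (j <= clen m - 1)%N &
      ((w3 m j %% 4 == i1 %% 4) || (w3 m j %% 4 == i2 %% 4))%N].

Definition gpoly (F : fieldType) (alpha : F) (i1 i2 m : nat) : {poly F} :=
  \prod_(0 <= j < clen m | Tset i1 i2 m j) ('X - (alpha ^+ j)%:P).

Definition inF3 (F : fieldType) (x : 'F_3) : F := (nat_of_ord x)%:R.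

Definition wpoly (n : nat) (c : 'rV['F_3]_n) : {poly 'F_3} := \sum_(i < n) (c 0 i)%:P * 'X^i.

(* membership in the cyclic code C_(i1,i2,m): the ideal generated by g in
   F_3[x]/(x^n - 1), words identified with their polynomial representatives
   of degree < n.  The identity c(x) = a(x) g(x) mod (x^n - 1) is checked
   after embedding F_3[x] into F[x] (g has its coefficients in F_3). *)
Definition in_code (F : fieldType) (alpha : F) (i1 i2 m : nat)
    (c : 'rV['F_3]_(clen m)) : Prop :=
  exists a : {poly 'F_3},
    map_poly (@inF3 F) (wpoly c) =
    (map_poly (@inF3 F) a * gpoly alpha i1 i2 m) %% ('X^(clen m) - 1).

Definition code_dim (F : fieldType) (alpha : F) (i1 i2 m k : nat) : Prop :=
  exists V : {vspace 'rV['F_3]_(clen m)},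
    (forall c, c \in V <-> in_code alpha i1 i2 c) /\ \dim V = k.

From HB Require Import structures.
From mathcomp Require Import all_boot all_order all_algebra all_field.
From mathcomp Require Import zify.
Import GRing.Theory.
Set Implicit Arguments. Unset Strict Implicit. Unset Printing Implicit Defensive.

(* Multiplying j by 3 modulo n = 3^m - 1 rotates its m ternary digits, so T is
   stable under j |-> 3j and g is fixed by Frobenius: g lies in F_3[x], and the
   ideal it generates has dimension n - deg g = n - |T|.  If N(r) counts the
   j < 3^m of 3-weight r mod 4, evaluating (1 + x + x^2)^m at the fourth roots
   of unity gives 4 N(r) = 3^m + (-1)^r + 2 Re(i^(m-r)).  Discarding j = 0
   (weight 0) and j = n (weight 2m = 2 mod 4) then gives, for m = 3 mod 4,
   |T| = n/2 - 1 + [3 in {i1, i2}]. *)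

Lemma w3S m j : w3 m.+1 j = j %% 3 + w3 m (j %/ 3).
Proof.
rewrite /w3 big_ord_recl /= expn0 divn1; congr (_ + _).
by apply: eq_bigr => t _; rewrite /bump /= add1n expnS divnMA.
Qed.

Lemma w3_0 m : w3 m 0 = 0.
Proof. by rewrite /w3 big1 // => t _; rewrite div0n. Qed.

Lemma w3_mod m j : w3 m (j %% 3 ^ m) = w3 m j.
Proof.
apply: eq_bigr => t _; rewrite [in RHS](divn_eq j (3 ^ m)).
have -> : 3 ^ m = 3 ^ (m - t) * 3 ^ t by rewrite -expnD subnK // ltnW.
set q := j %/ _; have d3 : 3 %| q * 3 ^ (m - t).
  by rewrite dvdn_mull // dvdn_exp // subn_gt0.
by rewrite mulnA divnMDl ?expn_gt0 // -modnDml (eqP d3).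
Qed.

Lemma w3_top m d r : d < 3 -> r < 3 ^ m -> w3 m.+1 (d * 3 ^ m + r) = w3 m r + d.
Proof.
move=> lt_d lt_r; rewrite [LHS]/w3 big_ord_recr /= -/(w3 m _) -[w3 m _]w3_mod.
by rewrite modnMDl modn_small // divnMDl ?expn_gt0 // divn_small // addn0 modn_small.
Qed.

Lemma w3_clen m : w3 m (clen m) = 2 * m.
Proof.
elim: m => [|m IHm]; first by rewrite /w3 big_ord0.
have lt_clen : clen m < 3 ^ m by rewrite /clen; have := expn_gt0 3 m; lia.
have -> : clen m.+1 = 2 * 3 ^ m + clen m by rewrite /clen expnS; lia.
by rewrite w3_top // IHm; lia.
Qed.

Lemma w3_mul3_mod m j : j < clen m -> w3 m (3 * j %% clen m) = w3 m j.
Proof.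
case: m => [|m]; first by rewrite /clen.
move=> lt_j; have pos := expn_gt0 3 m.
have lt_j3 : j < 3 * 3 ^ m - 1 by rewrite /clen expnS in lt_j.
set d := j %/ 3 ^ m; set r := j %% 3 ^ m.
have def_j : j = d * 3 ^ m + r by rewrite /d /r -divn_eq.
have lt_r : r < 3 ^ m by rewrite ltn_pmod.
have lt_d : d < 3 by rewrite ltn_divLR //; lia.
have def_3j : 3 * j = d * clen m.+1 + (3 * r + d).
  by rewrite def_j /clen expnS; nia.
have lt_rot : 3 * r + d < clen m.+1 by rewrite /clen expnS; nia.
rewrite def_3j modnMDl modn_small // def_j w3_top // w3S.
by rewrite mulnC modnMDl divnMDl // modn_small // divn_small // addn0 addnC.
Qed.

Lemma mul3_clen_modK m j : 0 < m -> j < clen m ->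
  3 ^ m.-1 * (3 * j %% clen m) %% clen m = j.
Proof.
move=> m_gt0 lt_j; rewrite modnMmr mulnA -expnSr prednK //.
have -> : 3 ^ m * j = j * clen m + j by rewrite /clen; have := expn_gt0 3 m; nia.
by rewrite modnMDl modn_small.
Qed.

Lemma Tset_mul3 i1 i2 m j : j < clen m ->
  Tset i1 i2 m (3 * j %% clen m) = Tset i1 i2 m j.
Proof.
move=> lt_j; have m_gt0 : 0 < m by case: m lt_j.
have lt_3j : 3 * j %% clen m < clen m by rewrite ltn_pmod //; lia.
have [-> | j_gt0] := posnP j; first by rewrite muln0 mod0n.
have : 3 * j %% clen m != 0.
  by apply: contraTneq j_gt0 => h; rewrite -(mul3_clen_modK m_gt0 lt_j) h muln0 mod0n.
rewrite /Tset w3_mul3_mod // -lt0n => ->; rewrite j_gt0 /=; congr andb; lia.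
Qed.

Definition wcount m r := count (fun j => w3 m j %% 4 == r) (iota 0 (3 ^ m)).

Lemma wcountS m r : r < 4 ->
  wcount m.+1 r = wcount m r + wcount m ((r + 3) %% 4) + wcount m ((r + 2) %% 4).
Proof.
move=> lt_r; have pos := expn_gt0 3 m.
have block s d : d < 3 -> s = d * 3 ^ m ->
    count (fun j => w3 m.+1 j %% 4 == r) (iota s (3 ^ m))
    = wcount m ((r + 4 - d) %% 4).
  move=> lt_d ->; rewrite -[d * _]addn0 iotaDl count_map; apply: eq_in_count => j.
  by rewrite mem_iota /= => lt_j; rewrite w3_top //; apply/eqP/eqP; lia.
rewrite [wcount m.+1 r]/wcount expnS.
have -> : 3 * 3 ^ m = 3 ^ m + 3 ^ m + 3 ^ m by lia.
rewrite !iotaD !count_cat (block _ 0) // (block _ 1) ?mul1n // (block _ 2) //; last lia.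
by congr (_ + _ + _); congr wcount; lia.
Qed.

(* [wdefect a r = (-1)^r + 2 Re (i^(a - r))] *)
Definition wdefect (a r : nat) : int :=
  match a, r with
  | 0, 0 => 3 | 0, _ => -1
  | 1, 3 => -3 | 1, _ => 1
  | 2, 2 => 3 | 2, _ => -1
  | _, 1 => -3 | _, _ => 1
  end%R.

Lemma wdefectS a r : a < 4 -> r < 4 ->
  wdefect ((a + 1) %% 4) r =
  (wdefect a r + wdefect a ((r + 3) %% 4) + wdefect a ((r + 2) %% 4))%R.
Proof. by case: a => [|[|[|[|?]]]] //; case: r => [|[|[|[|?]]]]. Qed.

Lemma wcountE m r : r < 4 ->
  ((4 * wcount m r)%N%:Z = (3 ^ m)%N%:Z + wdefect (m %% 4) r)%R.
Proof.
elim: m r => [|m IHm] r lt_r.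
  by rewrite /wcount /= /w3 big_ord0; case: r lt_r => [|[|[|[|?]]]].
have -> : m.+1 %% 4 = (m %% 4 + 1) %% 4 by rewrite modnDml addn1.
rewrite wcountS // wdefectS ?ltn_pmod // expnS.
have := IHm r lt_r; have := IHm ((r + 3) %% 4) (@ltn_pmod _ 4 isT).
have := IHm ((r + 2) %% 4) (@ltn_pmod _ 4 isT); lia.
Qed.

Definition wclass i1 i2 m j := (w3 m j %% 4 == i1 %% 4) || (w3 m j %% 4 == i2 %% 4).

Lemma count_Tset_wcount i1 i2 m : 0 < m -> i1 %% 4 != i2 %% 4 ->
  count (Tset i1 i2 m) (iota 0 (clen m)) + wclass i1 i2 m 0 + wclass i1 i2 m (clen m)
  = wcount m (i1 %% 4) + wcount m (i2 %% 4).
Proof.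
move=> m_gt0 neq_i; have le3 : 3 <= 3 ^ m by rewrite -{1}(expn1 3) leq_exp2l.
have -> : wcount m (i1 %% 4) + wcount m (i2 %% 4) = count (wclass i1 i2 m) (iota 0 (3 ^ m)).
  rewrite /wcount -count_predUI (@eq_count _ (predI _ _) pred0) ?count_pred0 ?addn0 //.
  move=> j /=; apply/negbTE/negP => /andP [/eqP a /eqP b].
  by move: neq_i; rewrite -a -b eqxx.
have -> : iota 0 (3 ^ m) = iota 0 (clen m) ++ [:: clen m].
  by rewrite -[[:: _]]/(iota (0 + clen m) 1) -iotaD /clen; congr iota; lia.
have -> : iota 0 (clen m) = 0 :: iota 1 (clen m - 1).
  by rewrite -[0 :: _]/(iota 0 1 ++ _) -iotaD /clen; congr iota; lia.
rewrite count_cat /= !addn0 (@eq_in_count _ _ (wclass i1 i2 m)).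
  by rewrite add0n [count _ _ + _]addnC.
move=> j; rewrite mem_iota => /andP [ge1 lt_j].
by rewrite /Tset ge1 /=; have -> : j <= clen m - 1 by lia.
Qed.

Lemma count_Tset_mod4_3 i1 i2 m : m %% 4 = 3 -> i1 < 4 -> i2 < 4 -> i1 != i2 ->
  (count (Tset i1 i2 m) (iota 0 (clen m))).+1 = clen m %/ 2 + (3 \in [:: i1; i2]).
Proof.
move=> m3 lt_i1 lt_i2 neq_i.
have neq_i4 : i1 %% 4 != i2 %% 4 by rewrite !modn_small.
have m_gt0 : 0 < m by lia.
have := count_Tset_wcount m_gt0 neq_i4; rewrite !modn_small //.
rewrite /wclass w3_0 w3_clen (_ : 2 * m %% 4 = 2); last lia.
have := wcountE m lt_i1; have := wcountE m lt_i2; rewrite m3 /clen.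
have := expn_gt0 3 m.
by case: i1 i2 lt_i1 lt_i2 neq_i {neq_i4} => [|[|[|[|?]]]] [|[|[|[|?]]]] //= *; lia.
Qed.

Local Open Scope ring_scope.

Section Multiples.

Variables (K : fieldType) (k n : nat) (p : {poly K}).
Hypotheses (p_neq0 : p != 0) (size_p : (k + size p = n.+1)%N).

Definition mulp_rV : 'Hom('rV[K]_k, 'rV[K]_n) := linfun (poly_rV \o (p \o* rVpoly)).

Lemma rVpoly_mulp_rV b : rVpoly (mulp_rV b) = rVpoly b * p.
Proof.
rewrite lfunE /= poly_rV_K //; apply: leq_trans (size_mul_leq _ _) _.
have : (size (rVpoly b) <= k)%N := size_poly _ _; lia.
Qed.

Lemma mulp_rV_inj : injective mulp_rV.
Proof.
move=> b1 b2 /(congr1 rVpoly); rewrite !rVpoly_mulp_rV => /(mulIf p_neq0).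
exact: (can_inj rVpolyK).
Qed.

Lemma mem_limg_mulp_rV c : (c \in limg mulp_rV) = (p %| rVpoly c).
Proof.
apply/memv_imgP/dvdpP => [[b _ ->]|[q def_c]].
  by exists (rVpoly b); rewrite rVpoly_mulp_rV.
exists (poly_rV q); first exact: memvf.
apply: (can_inj rVpolyK); rewrite rVpoly_mulp_rV poly_rV_K //.
have [->|q_neq0] := eqVneq q 0; first by rewrite size_poly0.
have : (0 < size q)%N by rewrite size_poly_gt0.
have : (size (rVpoly c) <= n)%N := size_poly _ _; rewrite def_c size_mul //.
move: size_p; set a := size q; set b := size p; lia.
Qed.

Lemma dim_limg_mulp_rV : \dim (limg mulp_rV) = k.
Proof.
rewrite limg_dim_eq ?dimvf ?dim_matrix; first exact: mul1n.
by rewrite capfv; apply/eqP/lker0P/mulp_rV_inj.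
Qed.

End Multiples.

Section Generator.

Variables (F : fieldType) (alpha : F) (m : nat).
Hypothesis prim : (clen m).-primitive_root alpha.

Let clen_gt0 : (0 < clen m)%N := prim_order_gt0 prim.

Lemma gpoly_frobenius (pcharF : 3%N \in [pchar F]) i1 i2 :
  map_poly (pFrobenius_aut pcharF) (gpoly alpha i1 i2 m) = gpoly alpha i1 i2 m.
Proof.
have m_gt0 : (0 < m)%N by move: clen_gt0; case: m.
rewrite /gpoly map_prod_XsubC !big_mkord.
pose mul3 (j : 'I_(clen m)) : 'I_(clen m) := Ordinal (ltn_pmod (3 * j) clen_gt0).
have mul3_inj : injective mul3.
  move=> j1 j2 /(congr1 (fun j : 'I_(clen m) => 3 ^ m.-1 * j %% clen m)%N) /=.
  by rewrite !mul3_clen_modK //; apply: val_inj.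
rewrite [RHS](reindex_inj mul3_inj); apply: eq_big => j; first by rewrite Tset_mul3.
by move=> _ /=; rewrite pFrobenius_autE -exprM prim_expr_mod // mulnC.
Qed.

Lemma size_gpoly i1 i2 :
  size (gpoly alpha i1 i2 m) = (count (Tset i1 i2 m) (iota 0 (clen m))).+1.
Proof. by rewrite /gpoly -big_filter size_prod_XsubC size_filter /index_iota subn0. Qed.

Lemma gpoly_dvd_Xn_sub1 i1 i2 : gpoly alpha i1 i2 m %| 'X^(clen m) - 1.
Proof. by rewrite -(factor_Xn_sub_1 prim) (bigID (Tset i1 i2 m)) dvdp_mulr. Qed.

End Generator.

Lemma wpolyE n (c : 'rV['F_3]_n) : wpoly c = rVpoly c.
Proof. by rewrite /rVpoly poly_def; apply: eq_bigr => i _; rewrite mul_polyC valK. Qed.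

Lemma inF3E (L : fieldExtType 'F_3) : inF3 L =1 in_alg L.
Proof. by move=> a; rewrite /inF3 in_algE -[in RHS](natr_Zp a) scaler_nat. Qed.

Section CyclicCode.

Variables (L : fieldExtType 'F_3) (alpha : L) (m i1 i2 : nat).
Hypothesis prim : (clen m).-primitive_root alpha.

Lemma gpoly_polyOver1 : gpoly alpha i1 i2 m \is a polyOver 1%VS.
Proof.
have pcharL : 3%N \in [pchar L] by rewrite pchar_lalg pchar_Fp.
apply/polyOverP => i; rewrite Fermat's_little_theorem dimv1 card_Fp // expn1.
have := congr1 (coefp i) (gpoly_frobenius prim pcharL i1 i2).
by rewrite /= coef_map /= pFrobenius_autE => ->.
Qed.

Lemma in_code_dvdp (g : {poly 'F_3}) (c : 'rV_(clen m)) :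
  gpoly alpha i1 i2 m = map_poly (in_alg L) g ->
  in_code alpha i1 i2 c <-> g %| rVpoly c.
Proof.
move=> def_g; have mapE := eq_map_poly (inF3E L).
rewrite /in_code wpolyE; split.
  case=> a; rewrite !mapE -(dvdp_map (in_alg L)) -def_g => ->.
  by rewrite -dvdp_mod ?gpoly_dvd_Xn_sub1 // dvdp_mull.
case/dvdpP => a def_c; exists a; rewrite !mapE def_g -rmorphM -def_c modp_small //.
rewrite size_map_poly size_XnsubC ?(prim_order_gt0 prim) // ltnS.
exact: size_poly.
Qed.

Lemma code_dim_gpoly :
  code_dim alpha i1 i2 m (clen m - count (Tset i1 i2 m) (iota 0 (clen m))).
Proof.
have /polyOver1P [g def_g] := gpoly_polyOver1.
set d := count _ _.
have size_g : size g = d.+1 by rewrite -(size_map_poly (in_alg L)) -def_g size_gpoly.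
have g_neq0 : g != 0 by rewrite -size_poly_gt0 size_g.
have le_d : (d <= clen m)%N by rewrite -[X in (_ <= X)%N](size_iota 0) count_size.
have size_k : (clen m - d + size g = (clen m).+1)%N by rewrite size_g; lia.
exists (limg (mulp_rV (clen m - d) (clen m) g)); split; last exact: dim_limg_mulp_rV.
by move=> c; rewrite mem_limg_mulp_rV //; apply: iff_sym; apply: in_code_dvdp.
Qed.

End CyclicCode.

Lemma code_dim_mod4_3 (L : fieldExtType 'F_3) (alpha : L) m i1 i2 :
  (m %% 4 = 3)%N -> (clen m).-primitive_root alpha ->
  (i1 < 4)%N -> (i2 < 4)%N -> i1 != i2 ->
  code_dim alpha i1 i2 m (if 3%N \in [:: i1; i2] then clen m %/ 2 else (clen m + 2) %/ 2)%N.
Proof.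
move=> m3 prim lt_i1 lt_i2 neq_i.
suff -> : (if 3 \in [:: i1; i2] then clen m %/ 2 else (clen m + 2) %/ 2)%N
    = (clen m - count (Tset i1 i2 m) (iota 0 (clen m)))%N by exact: code_dim_gpoly.
have := count_Tset_mod4_3 m3 lt_i1 lt_i2 neq_i.
have : (3 ^ m %% 2 = 1)%N by rewrite modn2 oddX orbT.
by rewrite /clen; case: (3 \in _); lia.
Qed.

Theorem theorem1 (m : nat) (F : finFieldType) (alpha : F) :
  (m %% 4 = 3)%N -> (3 <= m)%N ->
  #|F| = (3 ^ m)%N ->
  (clen m).-primitive_root alpha ->
  (code_dim alpha 0 3 m (clen m %/ 2) /\
   code_dim alpha 1 2 m ((clen m + 2) %/ 2)) /\
  (code_dim alpha 2 3 m (clen m %/ 2) /\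
   code_dim alpha 0 1 m ((clen m + 2) %/ 2)).
Proof.
move=> m3 _ card_F prim.
(* [pPrimeCharType pcharF] is [F] with its [F_3]-algebra structure. *)
have pcharF : (3 \in [pchar F])%N by apply: card_finPcharP card_F _.
have dim i1 i2 := @code_dim_mod4_3 (pPrimeCharType pcharF) alpha m i1 i2 m3 prim.
by split; split; apply: dim.
Qed.
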